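(* Let $m,n$ be positive integers and let $\Pi$ be an $(m,n)$-Dyck path. For a north step $N$ of $\Pi$ going from $(a,b)$ to $(a,b+1)$, define its rational diagonal \[ D(N)=\{(u,v)\in\mathbb{R}^2:\ u<a,\ \ mb-na< mv-nu\le m(b+1)-na\}, \] i.e. the region to the left of $N$ lying between the two lines of slope $n/m$ through the endpoints of $N$, including the upper line but not the lower one. Then $\operatorname{pdinv}(\Pi)$ equals the number of pairs $(N,E)$, where $N$ is a north step and $E$ is an east step of $\Pi$, such that the (closed) segment $E$ has a point in $D(N)$.
   Context: An $(m,n)$-Dyck path is a lattice path from $(0,0)$ to $(m,n)$ consisting of unit north and east steps that stays weakly above the line $y=\frac{n}{m}x$. Let $\lambda(\Pi)$ be the set of unit cells of the rectangle $[0,m]\times[0,n]$ lying above (northwest of) $\Pi$; for $c\in\lambda(\Pi)$, $\operatorname{arm}(c)$ (resp. $\operatorname{leg}(c)$) is the number of cells of $\lambda(\Pi)$ strictly east of $c$ in its row (resp. strictly south of $c$ in its column). The path dinv is \[ \operatorname{pdinv}(\Pi)=\sum_{c\in\lambda(\Pi)}\chi\left(\frac{\operatorname{arm}(c)}{\operatorname{leg}(c)+1}\le\frac{m}{n}<\frac{\operatorname{arm}(c)+1}{\operatorname{leg}(c)}\right), \] with the convention $x/0=\infty$, and $\chi(P)$ is $1$ if $P$ holds and $0$ otherwise. *)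

From HB Require Import structures.
From mathcomp Require Import all_boot all_order all_algebra.
From mathcomp Require Import boolp reals.
Set Implicit Arguments. Unset Strict Implicit. Unset Printing Implicit Defensive.
Import Order.TTheory GRing.Theory Num.Theory.

(* A lattice path is a sequence of steps: true = north step, false = east step. *)

(* Number of east / north steps among the first k steps: coordinates of the
   k-th vertex of the path (the path starts at (0,0)). *)
Definition xcoord (p : seq bool) (k : nat) : nat := count_mem false (take k p).
Definition ycoord (p : seq bool) (k : nat) : nat := count_mem true (take k p).

Definition dyck_path (m n : nat) (p : seq bool) : Prop :=
  count_mem true p = n /\ count_mem false p = m /\
  forall k, k <= size p -> n * xcoord p k <= m * ycoord p k.

(* Heights of the east steps: the i-th entry is the y-coordinate of the
   i-th east step (numbered from 0). *)
Fixpoint east_heights (p : seq bool) (h : nat) : seq nat :=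
  match p with
  | [::] => [::]
  | true :: q => east_heights q h.+1
  | false :: q => h :: east_heights q h
  end.

(* The unit cell [i,i+1] x [j,j+1] of [0,m] x [0,n] lies above (northwest of)
   the path iff the east step of the path in column i is at height <= j. *)
Definition in_lambda (m n : nat) (p : seq bool) (i j : nat) : bool :=
  [&& i < m, j < n & nth 0 (east_heights p 0) i <= j].

Definition arm (m n : nat) (p : seq bool) (i j : nat) : nat :=
  count (fun i' => (i < i') && in_lambda m n p i' j) (iota 0 m).

Definition leg (m n : nat) (p : seq bool) (i j : nat) : nat :=
  count (fun j' => (j' < j) && in_lambda m n p i j') (iota 0 n).

(* The chi condition  arm/(leg+1) <= m/n < (arm+1)/leg  with x/0 = infinity. *)
Definition pdinv_cond (m n a l : nat) : bool :=
  ((a%:R / (l.+1)%:R : rat) <= m%:R / n%:R)%R &&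
  ((l == 0) || ((m%:R / n%:R : rat) < (a.+1)%:R / l%:R)%R).

Definition pdinv (m n : nat) (p : seq bool) : nat :=
  \sum_(i < m) \sum_(j < n)
     (in_lambda m n p i j && pdinv_cond m n (arm m n p i j) (leg m n p i j)).

Definition rat_diag (R : realType) (m n a b : nat) (u v : R) : Prop :=
  (u < a%:R /\
  m%:R * b%:R - n%:R * a%:R < m%:R * v - n%:R * u /\
  m%:R * v - n%:R * u <= m%:R * (b.+1)%:R - n%:R * a%:R)%R.

Definition NE_pair (R : realType) (m n : nat) (p : seq bool) (k l : nat) : Prop :=
  nth false p k = true /\ nth true p l = false /\
  exists t : R, (0 <= t <= 1)%R /\
    rat_diag m n (xcoord p k) (ycoord p k)
      ((xcoord p l)%:R + t)%R (ycoord p l)%:R.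

From HB Require Import structures.
From mathcomp Require Import all_boot all_order all_algebra.
From mathcomp Require Import boolp reals lra zify.
Set Implicit Arguments. Unset Strict Implicit. Unset Printing Implicit Defensive.
Import Order.TTheory GRing.Theory Num.Theory.

(* Index the north steps by their heights j and the east steps by their
   columns i, and let a_j be the abscissa of the j-th north step and h_i the
   height of the i-th east step.  The cell (i,j) lies in lambda iff h_i <= j,
   iff i < a_j, and then arm = a_j - i - 1 and leg = j - h_i.  For such a pair
   the east step meets D(N_j) iff some point of it lies strictly above the
   lower line and weakly below the upper one, which amounts to
   n arm <= m (leg + 1) and m leg < n (arm + 1): the pdinv condition.  When
   i >= a_j the east step lies weakly right of N_j and misses D(N_j). *)

Lemma scaled_unit_interval_meets (R : realFieldType) (c lo hi : R) :
  (0 < c)%R -> (lo < hi)%R ->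
  (exists t, (0 <= t <= 1)%R /\ (lo <= c * t < hi)%R) <-> (lo <= c)%R /\ (0 < hi)%R.
Proof.
move=> c0 lo_hi; split=> [[t [/andP[t0 t1] /andP[lo_ct ct_hi]]] | [lo_c hi0]].
  have ct0 : (0 <= c * t)%R by rewrite mulr_ge0 // ltW.
  have ctc : (c * t <= c)%R by rewrite -[leRHS]mulr1 ler_wpM2l // ltW.
  by split; lra.
have [lo0 | lo_pos] := lerP lo 0.
  by exists 0%R; rewrite lexx ler01 mulr0 lo0 hi0.
have c_lo : (c * (lo / c) = lo)%R by rewrite mulrC divfK // gt_eqF.
exists (lo / c)%R; rewrite c_lo lexx lo_hi divr_ge0 ?(ltW lo_pos) ?(ltW c0) //=.
by rewrite ler_pdivrMr // mul1r.
Qed.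

Definition east_meets_diag (R : realType) (m n a b c d : nat) : bool :=
  `[< exists t : R, (0 <= t <= 1)%R /\ rat_diag m n a b (c%:R + t)%R d%:R >].

Lemma NE_pairE (R : realType) m n p k l :
  `[< NE_pair R m n p k l >] =
  [&& nth false p k, ~~ nth true p l &
      east_meets_diag R m n (xcoord p k) (ycoord p k) (xcoord p l) (ycoord p l)].
Proof.
rewrite /NE_pair; apply/asboolP/and3P => [[-> [-> H]] | [-> /negbTE -> /asboolP H]] //.
by split=> //; apply/asboolP.
Qed.

Lemma east_meets_diag_right (R : realType) m n a b c d :
  a <= c -> east_meets_diag R m n a b c d = false.
Proof.
move=> a_c; apply/asboolP => [[t [/andP[t0 _] [lt_c_a _]]]].
have : (a%:R <= c%:R :> R)%R by rewrite ler_nat.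
lra.
Qed.

Lemma east_meets_diag_leftE (R : realType) m n i h A L : 0 < m -> 0 < n ->
  east_meets_diag R m n (i + A.+1) (h + L) i h =
  (n * A <= m * L.+1) && (m * L < n * A.+1).
Proof.
move=> m0 n0.
set lo : R := (n%:R * A.+1%:R - m%:R * L.+1%:R)%R.
set hi : R := (n%:R * A.+1%:R - m%:R * L%:R)%R.
have m0' : (0 < m%:R :> R)%R by rewrite ltr0n.
have n0' : (0 < n%:R :> R)%R by rewrite ltr0n.
have diagE t : (0 <= t <= 1)%R ->
    rat_diag m n (i + A.+1) (h + L) (i%:R + t)%R h%:R <-> (lo <= n%:R * t < hi)%R.
  case/andP=> t0 t1; rewrite /rat_diag /lo /hi !natrD -!natr1 !natrD !mulrDr !mulr1.
  have A0 : (0 <= A%:R :> R)%R by rewrite ler0n.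
  have mL0 : (0 <= m%:R * L%:R :> R)%R by rewrite mulr_ge0 ?ler0n.
  split=> [[_ [? ?]] | /andP[? ?]]; first by apply/andP; split; lra.
  have : (n%:R * t < n%:R * (A%:R + 1) :> R)%R by lra.
  by rewrite ltr_pM2l // => ?; do !split; lra.
have -> : (n * A <= m * L.+1) = (lo <= n%:R)%R.
  by rewrite /lo lerBlDr -!natrM -natrD ler_nat; lia.
have -> : (m * L < n * A.+1) = (0 < hi)%R by rewrite /hi subr_gt0 -!natrM ltr_nat.
have lo_hi : (lo < hi)%R by rewrite /lo /hi -!natr1 !mulrDr; lra.
have meets := scaled_unit_interval_meets n0' lo_hi.
apply/asboolP/andP => [[t [t01 /(diagE t t01) Ht]] | /meets[t [t01 Ht]]].
  by apply/meets; exists t.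
by exists t; split=> //; apply/diagE.
Qed.

Lemma pdinv_condE m n A L : 0 < m -> 0 < n ->
  pdinv_cond m n A L = (n * A <= m * L.+1) && (m * L < n * A.+1).
Proof.
move=> m0 n0; rewrite /pdinv_cond.
rewrite ler_pdivrMr ?ltr0n // mulrAC ler_pdivlMr ?ltr0n // -!natrM ler_nat.
rewrite mulnC [m * _]mulnC; congr (_ && _).
case: L => [|L] /=; first by symmetry; apply/idP; lia.
rewrite ltr_pdivrMr ?ltr0n // mulrAC ltr_pdivlMr ?ltr0n // -!natrM ltr_nat.
by rewrite mulnC [_ * n]mulnC.
Qed.

Fixpoint north_xcoords (p : seq bool) (x : nat) : seq nat :=
  match p with
  | [::] => [::]
  | true :: q => x :: north_xcoords q x
  | false :: q => north_xcoords q x.+1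
  end.

Lemma nth_east_heights_geq p h i :
  i < count_mem false p -> h <= nth 0 (east_heights p h) i.
Proof.
elim: p h i => [|[] q IH] h i //=; first by move/IH/ltnW.
by case: i => [|i] //= /IH.
Qed.

Lemma nth_north_xcoords_geq p x j :
  j < count_mem true p -> x <= nth 0 (north_xcoords p x) j.
Proof.
elim: p x j => [|[] q IH] x j //=; first by case: j => [|j] //= /IH.
by move/IH/ltnW.
Qed.

Lemma nth_north_xcoords_leq p x j : nth 0 (north_xcoords p x) j <= x + count_mem false p.
Proof.
elim: p x j => [|[] q IH] x j /=; first by rewrite nth_nil.
  by case: j => [|j] /=; rewrite ?leq_addr ?add0n.
by rewrite add1n addnS -addSn.
Qed.

(* The two sequences describe conjugate partitions: the cell (i, j) lies
   above the path iff it lies left of the j-th north step. *)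
Lemma east_heights_conjugate p h x i j :
  i < count_mem false p -> j < count_mem true p ->
  (nth 0 (east_heights p h) i <= j + h) = (i + x < nth 0 (north_xcoords p x) j).
Proof.
elim: p h x i j => [|[] q IH] h x i j //=; rewrite add0n => Hi Hj.
- case: j Hj => [|j] Hj /=; last by rewrite -(IH h.+1 x) // addSnnS.
  by have := nth_east_heights_geq h.+1 Hi; lia.
- case: i Hi => [|i] Hi /=; last by rewrite (IH h x.+1) // addSnnS addnS.
  by have := nth_north_xcoords_geq x.+1 Hj; lia.
Qed.

Lemma xcoord0 p : xcoord p 0 = 0. Proof. by case: p. Qed.
Lemma ycoord0 p : ycoord p 0 = 0. Proof. by case: p. Qed.
Lemma xcoordS b q k : xcoord (b :: q) k.+1 = ~~ b + xcoord q k.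
Proof. by case: b. Qed.
Lemma ycoordS b q k : ycoord (b :: q) k.+1 = b + ycoord q k.
Proof. by case: b. Qed.

Lemma sum_east_steps (F : nat -> nat -> nat) p x0 y0 :
  \sum_(l < size p) (if nth true p l then 0 else F (x0 + xcoord p l) (y0 + ycoord p l))
  = \sum_(i < count_mem false p) F (x0 + i) (nth 0 (east_heights p y0) i).
Proof.
elim: p x0 y0 => [|b q IH] x0 y0; first by rewrite !big_ord0.
rewrite big_ord_recl /= -/(size q).
under eq_bigr => l _ do rewrite /bump /= add0n xcoordS ycoordS !addnA.
case: b => /=; rewrite addn0 addn1 IH; first by rewrite add0n.
rewrite add1n big_ord_recl xcoord0 addn0.
by congr (_ + _); apply: eq_bigr => i _; rewrite addSnnS.
Qed.

Lemma sum_north_steps (G : nat -> nat -> nat) p x0 y0 :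
  \sum_(k < size p) (if nth false p k then G (x0 + xcoord p k) (y0 + ycoord p k) else 0)
  = \sum_(j < count_mem true p) G (nth 0 (north_xcoords p x0) j) (y0 + j).
Proof.
elim: p x0 y0 => [|b q IH] x0 y0; first by rewrite !big_ord0.
rewrite big_ord_recl /= -/(size q).
under eq_bigr => k _ do rewrite /bump /= add0n xcoordS ycoordS !addnA.
case: b => /=; rewrite addn0 addn1 IH; last by rewrite add0n.
rewrite add1n big_ord_recl ycoord0 addn0.
by congr (_ + _); apply: eq_bigr => j _; rewrite addSnnS.
Qed.

Lemma sum_NE_pairs (R : realType) m n p :
  \sum_(k < size p) \sum_(l < size p) `[< NE_pair R m n p k l >] =
  \sum_(j < count_mem true p) \sum_(i < count_mem false p)
     east_meets_diag R m n (nth 0 (north_xcoords p 0) j) j i (nth 0 (east_heights p 0) i).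
Proof.
pose G a b := \sum_(l < size p) (if nth true p l then 0
                 else east_meets_diag R m n a b (0 + xcoord p l) (0 + ycoord p l)).
transitivity (\sum_(k < size p)
    (if nth false p k then G (0 + xcoord p k) (0 + ycoord p k) else 0)).
  apply: eq_bigr => k _; rewrite /G; case: ifP => Nk.
    by apply: eq_bigr => l _; rewrite NE_pairE Nk !add0n; case: (nth true p l).
  by apply: big1 => l _; rewrite NE_pairE Nk.
rewrite sum_north_steps; apply: eq_bigr => j _.
rewrite /G (sum_east_steps (east_meets_diag R m n _ _)).
by apply: eq_bigr => i _; rewrite !add0n.
Qed.

Lemma count_iota_range lo hi N :
  count (fun x => (lo <= x) && (x < hi)) (iota 0 N) = minn hi N - lo.
Proof.
elim: N => [|N IH]; first by rewrite minn0.
rewrite -addn1 iotaD count_cat IH /= add0n addn0.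
by case: (leqP lo N) => ?; case: (ltnP N hi) => ? /=; lia.
Qed.

Section Cells.

Variables (m n : nat) (p : seq bool).
Hypotheses (p_north : count_mem true p = n) (p_east : count_mem false p = m).

Local Notation a j := (nth 0 (north_xcoords p 0) j).
Local Notation h i := (nth 0 (east_heights p 0) i).

Lemma in_lambdaE i j : i < m -> j < n -> in_lambda m n p i j = (i < a j).
Proof.
move=> lt_i_m lt_j_n; rewrite /in_lambda lt_i_m lt_j_n -[j in _ <= j]addn0.
by rewrite (east_heights_conjugate 0 0) ?addn0 ?p_east ?p_north.
Qed.

Lemma arm_in_lambda i j : i < a j -> j < n -> arm m n p i j = a j - i.+1.
Proof.
move=> lt_i_a lt_j_n; have a_m : a j <= m by rewrite -p_east nth_north_xcoords_leq.
rewrite /arm -(minn_idPl a_m) -count_iota_range.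
apply: eq_in_count => i' /=; rewrite mem_iota add0n => /andP[_ lt_i'_m].
by rewrite in_lambdaE.
Qed.

Lemma leg_in_lambda i j : i < m -> h i <= j -> j < n -> leg m n p i j = j - h i.
Proof.
move=> lt_i_m h_j lt_j_n.
rewrite /leg -[j in RHS](minn_idPl (ltnW lt_j_n)) -count_iota_range.
apply: eq_in_count => j' /=; rewrite mem_iota add0n => /andP[_ lt_j'_n].
by rewrite /in_lambda lt_i_m lt_j'_n andbC.
Qed.

Lemma pdinv_cellE (R : realType) i j : 0 < m -> 0 < n -> i < m -> j < n ->
  in_lambda m n p i j && pdinv_cond m n (arm m n p i j) (leg m n p i j) =
  east_meets_diag R m n (a j) j i (h i).
Proof.
move=> m0 n0 lt_i_m lt_j_n; rewrite in_lambdaE //.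
have [lt_i_a | le_a_i] /= := ltnP i (a j); last by rewrite east_meets_diag_right.
have h_j : h i <= j by rewrite -[j]addn0 (east_heights_conjugate 0 0) ?addn0 ?p_east ?p_north.
rewrite arm_in_lambda // leg_in_lambda // pdinv_condE //.
have := east_meets_diag_leftE R i (h i) (a j - i.+1) (j - h i) m0 n0.
by rewrite -addSnnS !subnKC.
Qed.

End Cells.

Theorem theorem1 (R : realType) (m n : nat) (p : seq bool) :
  0 < m -> 0 < n -> dyck_path m n p ->
  pdinv m n p =
  \sum_(k < size p) \sum_(l < size p) `[< NE_pair R m n p k l >].
Proof.
move=> m0 n0 [p_north [p_east _]].
rewrite sum_NE_pairs p_north p_east /pdinv exchange_big /=.
by apply: eq_bigr => j _; apply: eq_bigr => i _; rewrite (pdinv_cellE p_north p_east R).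
Qed.
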